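(* Let $\mathbf{p}=\langle x_1,y_1,r_1,\dots,x_n,y_n,r_n\rangle$ be a packing of a planar embedded graph $G=(V,E)$, with vertex set partitioned as $V=V^+\sqcup V^-\sqcup V^=\sqcup V^0$. Suppose there exists an equilibrium stress $\omega:E\to\mathbb{R}$ (i.e. $\sum_{j:(i,j)\in E}\omega_{ij}(\mathbf{p}_i-\mathbf{p}_j)=0$ for every vertex $i$) whose radial force sum $\omega_i=\sum_{j:(i,j)\in E}\omega_{ij}(r_i+r_j)$ is positive for $i\in V^-$, negative for $i\in V^+$, and $0$ for $i\in V^0$. Let $\mathbf{p}'=\langle x_1',y_1',r_1',\dots,x_n',y_n',r_n'\rangle$ be any vector (not required to preserve tangencies) such that for every edge $(i,j)\in E$: (1) if $\omega_{ij}<0$, then $(\mathbf{p}_i-\mathbf{p}_j)\cdot(\mathbf{p}_i'-\mathbf{p}_j')-(r_i+r_j)(r_i'+r_j')\ge 0$ (disks $i$ and $j$ remain tangent or become separated to first order); (2) if $\omega_{ij}>0$, then $(\mathbf{p}_i-\mathbf{p}_j)\cdot(\mathbf{p}_i'-\mathbf{p}_j')-(r_i+r_j)(r_i'+r_j')\le 0$ (disks $i$ and $j$ remain tangent or become overlapped to first order); and (3) $r_k'\ge 0$ for $k\in V^+$, $r_k'\le 0$ for $k\in V^-$, $r_k'=0$ for $k\in V^=$. Then $r_k'=0$ for all $k\in V^+\cup V^-$, and $(\mathbf{p}_i-\mathbf{p}_j)\cdot(\mathbf{p}_i'-\mathbf{p}_j')=(r_i+r_j)(r_i'+r_j')$ for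 every edge $(i,j)$ with $\omega_{ij}\neq 0$ (all such tangencies are preserved to first order).
   Context: A packing of $G$ assigns to each vertex $i$ a disk with center $\mathbf{p}_i=(x_i,y_i)$ and radius $r_i>0$, such that disks joined by an edge are externally tangent, $(r_i+r_j)^2=\|\mathbf{p}_i-\mathbf{p}_j\|^2$. The sets $V^+,V^-,V^=,V^0$ are the disks allowed only to increase (or stay) in radius, only to decrease (or stay), with fixed radius, and free, respectively. *)

From HB Require Import structures.
From mathcomp Require Import all_boot all_order all_algebra.
Set Implicit Arguments. Unset Strict Implicit. Unset Printing Implicit Defensive.
Import Order.TTheory GRing.Theory Num.Theory.
Local Open Scope ring_scope.

Definition simple_graph (n : nat) (e : rel 'I_n) : Prop :=
  (forall i j, e i j = e j i) /\ (forall i, ~~ e i i).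

(* The four constraint classes V^+, V^-, V^=, V^0 : a function assigning
   each vertex exactly one class is the same as a partition of V. *)
Inductive vkind := Vplus | Vminus | Veq | Vfree.

Definition packing (R : realFieldType) (n : nat) (e : rel 'I_n)
  (x y r : 'I_n -> R) : Prop :=
  (forall i, 0 < r i) /\
  (forall i j, e i j ->
     (r i + r j) ^+ 2 = (x i - x j) ^+ 2 + (y i - y j) ^+ 2).

(* An (edge-)stress: a symmetric weight on ordered pairs (only values on
   edges matter). *)
Definition sym_stress (R : realFieldType) (n : nat) (w : 'I_n -> 'I_n -> R) :=
  forall i j, w i j = w j i.

Definition equilibrium (R : realFieldType) (n : nat) (e : rel 'I_n)
  (x y : 'I_n -> R) (w : 'I_n -> 'I_n -> R) : Prop :=
  forall i, \sum_(j | e i j) w i j * (x i - x j) = 0 /\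
            \sum_(j | e i j) w i j * (y i - y j) = 0.

Definition radial_sum (R : realFieldType) (n : nat) (e : rel 'I_n)
  (r : 'I_n -> R) (w : 'I_n -> 'I_n -> R) (i : 'I_n) : R :=
  \sum_(j | e i j) w i j * (r i + r j).

Definition tang_var (R : realFieldType) (n : nat) (x y r x' y' r' : 'I_n -> R)
  (i j : 'I_n) : R :=
  (x i - x j) * (x' i - x' j) + (y i - y j) * (y' i - y' j)
  - (r i + r j) * (r' i + r' j).

From HB Require Import structures.
From mathcomp Require Import all_boot all_order all_algebra.
From mathcomp Require Import ring lra.
Set Implicit Arguments. Unset Strict Implicit. Unset Printing Implicit Defensive.
Import Order.TTheory GRing.Theory Num.Theory.
Local Open Scope ring_scope.

(* Pair the stress with the first-order motion: summing [w_ij * tang_var_ij]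
   over all ordered edges and regrouping by vertex, equilibrium kills the
   center terms and leaves [-2 * sum_i r'_i * omega_i].  The sign hypotheses
   make every edge term and every vertex term [<= 0], so an identity of the
   form [A = -2 B] with [A, B <= 0] forces all terms to vanish. *)

Lemma nsumr_eq0P (R : numDomainType) (I : finType) (P : pred I) (F : I -> R) :
  (forall i, P i -> F i <= 0) -> \sum_(i | P i) F i = 0 ->
  forall i, P i -> F i = 0.
Proof.
move=> F_le0 /eqP; rewrite -oppr_eq0 -sumrN => /eqP sumN0 i Pi.
apply: oppr_inj; rewrite oppr0.
by apply: (psumr_eq0P _ sumN0) => // j Pj; rewrite oppr_ge0 F_le0.
Qed.

Lemma mulr_sign_compat_le0 (R : realDomainType) (a b : R) :
  (a < 0 -> 0 <= b) -> (0 < a -> b <= 0) -> a * b <= 0.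
Proof.
case: (ltrgtP a 0) => [a_lt0 b_ge0 _|a_gt0 _ b_le0|->]; last by rewrite mul0r.
- by rewrite nmulr_rle0 ?b_ge0.
- by rewrite pmulr_rle0 ?b_le0.
Qed.

Lemma sum_sym_rel_swap (V : nmodType) (n : nat) (e : rel 'I_n)
    (G : 'I_n -> 'I_n -> V) :
  (forall i j, e i j = e j i) ->
  \sum_i \sum_(j | e i j) G i j = \sum_i \sum_(j | e i j) G j i.
Proof.
move=> e_sym.
under eq_bigr do rewrite big_mkcond.
rewrite exchange_big /=; apply: eq_bigr => i _.
by rewrite [RHS]big_mkcond; apply: eq_bigr => j _; rewrite e_sym.
Qed.

Section StressEnergy.

Variables (R : realFieldType) (n : nat) (e : rel 'I_n).
Variables (x y r x' y' r' : 'I_n -> R) (w : 'I_n -> 'I_n -> R).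
Hypothesis e_sym : forall i j, e i j = e j i.
Hypothesis w_sym : sym_stress w.
Hypothesis w_eq : equilibrium e x y w.

(* The work of the generalized force [w_ij (p_i - p_j, -(r_i + r_j))] of
   edge ij along the motion [(p'_i, r'_i)] of its endpoint i. *)
Definition edge_work (i j : 'I_n) : R :=
  w i j * ((x i - x j) * x' i + (y i - y j) * y' i - (r i + r j) * r' i).

Lemma stress_tang_var_split i j :
  w i j * tang_var x y r x' y' r' i j = edge_work i j + edge_work j i.
Proof. by rewrite /edge_work /tang_var w_sym; ring. Qed.

Lemma edge_work_sum i :
  \sum_(j | e i j) edge_work i j = - (r' i * radial_sum e r w i).
Proof.
have [eq_x eq_y] := w_eq i.
rewrite /radial_sum mulr_sumr -sumrN.
transitivity (\sum_(j | e i j) (w i j * (x i - x j)) * x' i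
            + \sum_(j | e i j) (w i j * (y i - y j)) * y' i
            + \sum_(j | e i j) - (r' i * (w i j * (r i + r j)))).
  by rewrite -!big_split; apply: eq_bigr => j _; rewrite /edge_work /=; ring.
by rewrite -!mulr_suml eq_x eq_y !mul0r !add0r.
Qed.

Lemma stress_tang_var_sum :
  \sum_i \sum_(j | e i j) w i j * tang_var x y r x' y' r' i j
  = - 2 * \sum_i r' i * radial_sum e r w i.
Proof.
under eq_bigr do under eq_bigr do rewrite stress_tang_var_split.
rewrite (eq_bigr _ (fun i _ => big_split _ _ _ _ _)) big_split /=.
rewrite -(sum_sym_rel_swap edge_work e_sym).
under eq_bigr do rewrite edge_work_sum.
by rewrite sumrN; ring.
Qed.

End StressEnergy.

Lemma radial_work_le0 (R : realFieldType) (n : nat) (e : rel 'I_n)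
    (kind : 'I_n -> vkind) (r r' : 'I_n -> R) (w : 'I_n -> 'I_n -> R) i :
  (kind i = Vminus -> 0 < radial_sum e r w i) ->
  (kind i = Vplus -> radial_sum e r w i < 0) ->
  (kind i = Vfree -> radial_sum e r w i = 0) ->
  (kind i = Vplus -> 0 <= r' i) ->
  (kind i = Vminus -> r' i <= 0) ->
  (kind i = Veq -> r' i = 0) ->
  r' i * radial_sum e r w i <= 0.
Proof.
move=> om_m om_p om_f r'_p r'_m r'_e; case K: (kind i).
- by rewrite mulrC nmulr_rle0 ?om_p ?r'_p.
- by rewrite mulrC pmulr_rle0 ?om_m ?r'_m.
- by rewrite r'_e // mul0r.
- by rewrite om_f // mulr0.
Qed.

Theorem mainTheorem4 (R : realFieldType) (n : nat) (e : rel 'I_n)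
  (kind : 'I_n -> vkind) (x y r : 'I_n -> R) (w : 'I_n -> 'I_n -> R)
  (x' y' r' : 'I_n -> R) :
  simple_graph e ->
  packing e x y r ->
  sym_stress w ->
  equilibrium e x y w ->
  (forall i, kind i = Vminus -> 0 < radial_sum e r w i) ->
  (forall i, kind i = Vplus -> radial_sum e r w i < 0) ->
  (forall i, kind i = Vfree -> radial_sum e r w i = 0) ->
  (forall i j, e i j -> w i j < 0 -> 0 <= tang_var x y r x' y' r' i j) ->
  (forall i j, e i j -> 0 < w i j -> tang_var x y r x' y' r' i j <= 0) ->
  (forall k, kind k = Vplus -> 0 <= r' k) ->
  (forall k, kind k = Vminus -> r' k <= 0) ->
  (forall k, kind k = Veq -> r' k = 0) ->
  (forall k, (kind k = Vplus \/ kind k = Vminus) -> r' k = 0) /\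
  (forall i j, e i j -> w i j != 0 ->
     (x i - x j) * (x' i - x' j) + (y i - y j) * (y' i - y' j)
     = (r i + r j) * (r' i + r' j)).
Proof.
move=> [e_sym _] _ w_sym w_eq om_m om_p om_f T_n T_p r'_p r'_m r'_e.
pose T := tang_var x y r x' y' r'.
have wT_le0 i j : e i j -> w i j * T i j <= 0.
  by move=> eij; apply: mulr_sign_compat_le0; [exact: T_n eij | exact: T_p eij].
have rw_le0 i : r' i * radial_sum e r w i <= 0.
  exact: radial_work_le0 (om_m i) (om_p i) (om_f i) (r'_p i) (r'_m i) (r'_e i).
have edge_sum_le0 i : \sum_(j | e i j) w i j * T i j <= 0.
  by apply: sumr_le0 => j; exact: wT_le0.
have A_le0 : \sum_i \sum_(j | e i j) w i j * T i j <= 0.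
  by apply: sumr_le0 => i _; exact: edge_sum_le0.
have B_le0 : \sum_i r' i * radial_sum e r w i <= 0.
  by apply: sumr_le0 => i _; exact: rw_le0.
have A_eq := stress_tang_var_sum r x' y' r' e_sym w_sym w_eq.
have [A0 B0] : (\sum_i \sum_(j | e i j) w i j * T i j = 0)
  /\ (\sum_i r' i * radial_sum e r w i = 0) by split; lra.
split=> [k k_pm | i j eij w_neq0].
- have /eqP := nsumr_eq0P (fun i _ => rw_le0 i) B0 (i := k) isT.
  rewrite mulf_eq0 => /orP[/eqP // | /eqP om0].
  by case: k_pm => [/om_p | /om_m]; rewrite om0 ltxx.
- have edge0 := nsumr_eq0P (fun i _ => edge_sum_le0 i) A0 (i := i) isT.
  have /eqP := nsumr_eq0P (wT_le0 i) edge0 eij.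
  by rewrite mulf_eq0 (negbTE w_neq0) /T /tang_var subr_eq0 => /eqP.
Qed.
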